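(* Let $\mathcal{P}\subseteq\mathbb{Z}_{\geq0}$ with $0\in\mathcal{P}$ and $\mathcal{P}-2\neq\emptyset$. Then $e_\mathcal{P}(z)=\sum_{n\in\mathcal{P}}z^n/n!$ satisfies the H-schema.
   Context: $\mathcal{P}-2=\{n-2:n\in\mathcal{P},n\ge2\}$. A function $\epsilon(z)$ analytic at $0$ with radius of convergence $R$ (possibly $\infty$) satisfies the H-schema if: (i) $\epsilon(0)\neq0$ and $\epsilon(z)$ cannot be written as $\epsilon_0+\epsilon_1z$ for any $\epsilon_0,\epsilon_1\in\mathbb{C}$; (ii) all Taylor coefficients $[z^n]\epsilon(z)$ are $\geq0$; (iii) there is a unique $\tau\in\mathbb{R}_{>0}$ with $\tau<R$ and $\epsilon(\tau)-\tau\epsilon'(\tau)=0$. *)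

From Stdlib Require Import Reals.
From Coquelicot Require Import Coquelicot.
Open Scope R_scope.

Definition H_schema (a : nat -> R) : Prop :=
  let eps := PSeries a in
  let Rad := CV_radius a in
  (* analytic at 0: positive radius of convergence *)
  Rbar_lt 0 Rad /\
  (eps 0 <> 0 /\
   ~ (exists e0 e1 : R, forall z : R, Rbar_lt (Rabs z) Rad -> eps z = e0 + e1 * z)) /\
  (forall n : nat, 0 <= a n) /\
  (exists! tau : R, 0 < tau /\ Rbar_lt tau Rad /\ eps tau - tau * Derive eps tau = 0).

Definition eP_coef (P : nat -> bool) (n : nat) : R :=
  if P n then / INR (Factorial.fact n) else 0.

(* Let a = eP_coef P; since 0 <= a_n <= 1/n!, the radius of convergence is
   infinite.  The function g(t) = t e'(t) - e(t) is the power series with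
   coefficients (n - 1) a_n: its constant term is -1 because 0 is in P, its
   other coefficients are nonnegative, and the one of index m >= 2 in P is
   positive.  Hence g is strictly increasing on [0, +oo), starts at g(0) = -1
   and dominates -1 + (m - 1) a_m t^m, so it has exactly one positive zero.
   Strict monotonicity of g also rules out an affine e, for which g would be
   constant. *)

From Stdlib Require Import Reals Lra Lia.
From Coquelicot Require Import Coquelicot.
Open Scope R_scope.

Lemma pow_lt_pow_l (x y : R) (n : nat) : 0 <= x < y -> (1 <= n)%nat -> x ^ n < y ^ n.
Proof.
  intros Hxy Hn; destruct n as [|n]; [lia|]; simpl.
  assert (x ^ n <= y ^ n) by (apply pow_incr; lra).
  assert (0 < y ^ n) by (apply pow_lt; lra).
  assert (0 <= x ^ n) by (apply pow_le; lra).
  nra.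
Qed.

Section NonnegativeTail.

Variable u : nat -> R.
Hypothesis u_tail_ge0 : forall n, (1 <= n)%nat -> 0 <= u n.

Lemma sum_f_R0_ge_head (k : nat) : u 0%nat <= sum_f_R0 u k.
Proof.
  induction k as [|k IH]; simpl; [lra|].
  pose proof (u_tail_ge0 (S k) ltac:(lia)); lra.
Qed.

Lemma sum_f_R0_le_series (l : R) (k : nat) : is_series u l -> sum_f_R0 u k <= l.
Proof.
  intros Hl; apply is_series_Reals in Hl.
  apply growing_ineq; [|exact Hl].
  intros n; simpl; pose proof (u_tail_ge0 (S n) ltac:(lia)); lra.
Qed.

Lemma is_series_ge_head_term (l : R) (m : nat) :
  is_series u l -> (1 <= m)%nat -> u 0%nat + u m <= l.
Proof.
  intros Hl Hm; destruct m as [|m]; [lia|].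
  pose proof (sum_f_R0_le_series l (S m) Hl).
  pose proof (sum_f_R0_ge_head m); simpl in *; lra.
Qed.

End NonnegativeTail.

Lemma CV_radius_le_abs (a b : nat -> R) :
  (forall n, Rabs (a n) <= Rabs (b n)) -> Rbar_le (CV_radius b) (CV_radius a).
Proof.
  intros Hab; refine (is_lub_Rbar_subset _ _ _ _ _ (CV_radius_bounded a) (CV_radius_bounded b)).
  intros r [M HM]; exists M; intros n.
  eapply Rle_trans; [|apply HM].
  rewrite !Rabs_mult; apply Rmult_le_compat_r; [apply Rabs_pos | apply Hab].
Qed.

Lemma CV_radius_inv_fact : CV_radius (fun n => / INR (Factorial.fact n)) = p_infty.
Proof.
  apply CV_radius_infinite_DAlembert.
  - intros n; apply Rinv_neq_0_compat, INR_fact_neq_0.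
  - apply is_lim_seq_Reals, Alembert_exp.
Qed.

Lemma eP_coef_ge0 (P : nat -> bool) (n : nat) : 0 <= eP_coef P n.
Proof.
  unfold eP_coef; destruct (P n); [|lra].
  apply Rlt_le, Rinv_0_lt_compat, INR_fact_lt_0.
Qed.

Lemma CV_radius_eP_coef (P : nat -> bool) : CV_radius (eP_coef P) = p_infty.
Proof.
  assert (Hle : forall n, Rabs (eP_coef P n) <= Rabs (/ INR (Factorial.fact n))).
  { intros n; unfold eP_coef; destruct (P n); [lra|].
    rewrite Rabs_R0; apply Rabs_pos. }
  pose proof (CV_radius_le_abs _ _ Hle) as H.
  rewrite CV_radius_inv_fact in H.
  destruct (CV_radius (eP_coef P)); easy.
Qed.

Definition PS_tangent_gap (a : nat -> R) : nat -> R :=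
  PS_minus (PS_incr_1 (PS_derive a)) a.

Lemma PS_tangent_gap_coef (a : nat -> R) (n : nat) :
  PS_tangent_gap a n = (INR n - 1) * a n.
Proof.
  unfold PS_tangent_gap, PS_minus, PS_incr_1, PS_derive; destruct n as [|n]; cbn.
  - lra.
  - rewrite <- S_INR; ring.
Qed.

Lemma CV_radius_tangent_gap (a : nat -> R) :
  Rbar_le (CV_radius a) (CV_radius (PS_tangent_gap a)).
Proof.
  pose proof (CV_radius_plus (PS_incr_1 (PS_derive a)) (PS_opp a)) as H.
  rewrite CV_radius_opp, CV_radius_incr_1, CV_radius_derive in H.
  replace (Rbar_min (CV_radius a) (CV_radius a)) with (CV_radius a) in H
    by (apply Rbar_min_case; reflexivity).
  exact H.
Qed.

Lemma CV_radius_tangent_gap_infinite (a : nat -> R) :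
  CV_radius a = p_infty -> CV_radius (PS_tangent_gap a) = p_infty.
Proof.
  intros Ha; pose proof (CV_radius_tangent_gap a) as H; rewrite Ha in H.
  destruct (CV_radius (PS_tangent_gap a)); easy.
Qed.

Lemma PSeries_tangent_gap (a : nat -> R) (t : R) :
  Rbar_lt (Rabs t) (CV_radius a) ->
  PSeries (PS_tangent_gap a) t = t * Derive (PSeries a) t - PSeries a t.
Proof.
  intros Ht; unfold PS_tangent_gap; rewrite PSeries_minus.
  - rewrite PSeries_incr_1, Derive_PSeries by exact Ht; reflexivity.
  - apply CV_radius_inside; rewrite CV_radius_incr_1, CV_radius_derive; exact Ht.
  - apply CV_radius_inside; exact Ht.
Qed.

Lemma tangent_gap_affine (f : R -> R) (e0 e1 : R) :
  (forall z, f z = e0 + e1 * z) -> forall t, t * Derive f t - f t = - e0.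
Proof.
  intros Hf t.
  rewrite (Derive_ext _ (fun z => e0 + e1 * z) _ Hf), Hf.
  replace (Derive (fun z => e0 + e1 * z) t) with e1.
  - ring.
  - symmetry; apply is_derive_unique; auto_derive; [exact I | ring].
Qed.

Lemma is_series_PSeries (c : nat -> R) (t : R) :
  Rbar_lt (Rabs t) (CV_radius c) -> is_series (fun n => c n * t ^ n) (PSeries c t).
Proof. intros Ht; apply Series_correct, ex_series_Rabs, CV_disk_inside, Ht. Qed.

Section NonnegativeTailPSeries.

Variable c : nat -> R.
Hypothesis c_tail_ge0 : forall n, (1 <= n)%nat -> 0 <= c n.

Lemma PSeries_ge_head_term (m : nat) (t : R) :
  (1 <= m)%nat -> 0 <= t -> Rbar_lt t (CV_radius c) ->
  c 0%nat + c m * t ^ m <= PSeries c t.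
Proof.
  intros Hm Ht Htc.
  assert (Hs := is_series_PSeries c t ltac:(rewrite Rabs_pos_eq; assumption)).
  assert (Hterm : forall n, (1 <= n)%nat -> 0 <= c n * t ^ n).
  { intros n Hn; apply Rmult_le_pos; [apply c_tail_ge0, Hn | apply pow_le, Ht]. }
  pose proof (is_series_ge_head_term _ Hterm _ _ Hs Hm); simpl in *; lra.
Qed.

Lemma PSeries_strict_incr (m : nat) (s t : R) :
  (1 <= m)%nat -> 0 < c m -> 0 <= s < t -> Rbar_lt t (CV_radius c) ->
  PSeries c s < PSeries c t.
Proof.
  intros Hm Hcm Hst Htc.
  assert (Hsc : Rbar_lt s (CV_radius c)) by (eapply Rbar_le_lt_trans; [|exact Htc]; simpl; lra).
  assert (Hdiff : is_series (fun n => c n * t ^ n - c n * s ^ n) (PSeries c t - PSeries c s)).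
  { apply (is_series_minus (V := R_NormedModule));
      apply is_series_PSeries; rewrite Rabs_pos_eq by lra; assumption. }
  assert (Hterm : forall n, (1 <= n)%nat -> 0 <= c n * t ^ n - c n * s ^ n).
  { intros n Hn; rewrite <- Rmult_minus_distr_l.
    assert (s ^ n <= t ^ n) by (apply pow_incr; lra).
    apply Rmult_le_pos; [apply c_tail_ge0, Hn | lra]. }
  pose proof (is_series_ge_head_term _ Hterm _ _ Hdiff Hm).
  assert (s ^ m < t ^ m) by (apply pow_lt_pow_l; assumption).
  simpl in *; nra.
Qed.

Lemma PSeries_eventually_pos (m : nat) :
  (1 <= m)%nat -> 0 < c m -> CV_radius c = p_infty ->
  exists T, 0 < T /\ 0 < PSeries c T.
Proof.
  intros Hm Hcm Hc.
  set (T := 1 + (1 + Rabs (c 0%nat)) / c m).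
  assert (HT : 1 <= T) by (assert (0 < (1 + Rabs (c 0%nat)) / c m)
    by (apply Rdiv_lt_0_compat; [pose proof (Rabs_pos (c 0%nat)) |]; lra); unfold T; lra).
  exists T; split; [lra|].
  pose proof (PSeries_ge_head_term m T Hm ltac:(lra) ltac:(rewrite Hc; exact I)).
  assert (T <= T ^ m) by (rewrite <- (pow_1 T) at 1; apply Rle_pow; assumption).
  assert (c m * T = c m + 1 + Rabs (c 0%nat)) by (unfold T; field; lra).
  pose proof (Rle_abs (- c 0%nat)); rewrite Rabs_Ropp in *.
  nra.
Qed.

End NonnegativeTailPSeries.

Lemma increasing_unique_pos_root (f : R -> R) (T : R) :
  continuity f -> (forall s t, 0 <= s < t -> f s < f t) ->
  f 0 < 0 -> 0 < T -> 0 < f T -> exists! z, 0 < z /\ f z = 0.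
Proof.
  intros Hcont Hincr H0 HT HfT.
  destruct (IVT f 0 T Hcont ltac:(lra) H0 HfT) as [z [Hz Hfz]].
  assert (Hzpos : 0 < z) by (destruct (Req_dec z 0); [subst; lra | lra]).
  exists z; split; [split; assumption|].
  intros y [Hy Hfy].
  destruct (Rtotal_order z y) as [Hlt|[Heq|Hgt]]; [|exact Heq|].
  - pose proof (Hincr z y ltac:(lra)); lra.
  - pose proof (Hincr y z ltac:(lra)); lra.
Qed.

Lemma tangent_gap_eP_coef_0 (P : nat -> bool) :
  P 0%nat = true -> PS_tangent_gap (eP_coef P) 0%nat = -1.
Proof.
  intros H0; rewrite PS_tangent_gap_coef; unfold eP_coef; rewrite H0; simpl; field.
Qed.

Lemma tangent_gap_eP_coef_ge0 (P : nat -> bool) (n : nat) :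
  (1 <= n)%nat -> 0 <= PS_tangent_gap (eP_coef P) n.
Proof.
  intros Hn; rewrite PS_tangent_gap_coef.
  apply Rmult_le_pos; [|apply eP_coef_ge0].
  apply le_INR in Hn; simpl in Hn; lra.
Qed.

Lemma tangent_gap_eP_coef_gt0 (P : nat -> bool) (m : nat) :
  (2 <= m)%nat -> P m = true -> 0 < PS_tangent_gap (eP_coef P) m.
Proof.
  intros Hm HPm; rewrite PS_tangent_gap_coef; unfold eP_coef; rewrite HPm.
  apply Rmult_lt_0_compat; [|apply Rinv_0_lt_compat, INR_fact_lt_0].
  apply le_INR in Hm; simpl in Hm; lra.
Qed.

Theorem lemma7p2 (P : nat -> bool) (h0 : P 0%nat = true)
  (h2 : exists n : nat, (2 <= n)%nat /\ P n = true) :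
  H_schema (eP_coef P).
Proof.
  destruct h2 as [m [Hm HPm]].
  set (a := eP_coef P); set (c := PS_tangent_gap a); set (g := PSeries c).
  assert (Ra : CV_radius a = p_infty) by apply CV_radius_eP_coef.
  assert (Rc : CV_radius c = p_infty) by apply CV_radius_tangent_gap_infinite, Ra.
  assert (Hg : forall t, PSeries a t - t * Derive (PSeries a) t = - g t).
  { intros t; unfold g, c; rewrite PSeries_tangent_gap by (rewrite Ra; exact I); ring. }
  assert (g_incr : forall s t, 0 <= s < t -> g s < g t).
  { intros s t Hst; apply (PSeries_strict_incr c (tangent_gap_eP_coef_ge0 P) m);
      [lia | apply tangent_gap_eP_coef_gt0 | | rewrite Rc]; easy. }
  assert (g0 : g 0 = -1) by (unfold g; rewrite PSeries_0; apply tangent_gap_eP_coef_0, h0).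
  unfold H_schema; cbv zeta; rewrite Ra.
  split; [exact I|]; split; [split|split].
  - rewrite PSeries_0; unfold a, eP_coef; rewrite h0; simpl; lra.
  - intros [e0 [e1 Haff]].
    pose proof (tangent_gap_affine (PSeries a) e0 e1 (fun z => Haff z I)) as Hconst.
    pose proof (g_incr 0 1 ltac:(lra)).
    pose proof (Hg 0); pose proof (Hg 1); pose proof (Hconst 0); pose proof (Hconst 1); lra.
  - apply eP_coef_ge0.
  - destruct (PSeries_eventually_pos c (tangent_gap_eP_coef_ge0 P) m ltac:(lia)
      (tangent_gap_eP_coef_gt0 P m Hm HPm) Rc) as [T [HT HgT]].
    assert (Hcont : continuity g) by (intros x; apply PSeries_continuity; rewrite Rc; exact I).
    destruct (increasing_unique_pos_root g T Hcont g_incr ltac:(lra) HT HgT)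
      as [z [[Hz Hgz] Huniq]].
    exists z; split.
    + repeat split; [exact Hz | rewrite Hg, Hgz; ring].
    + intros y [Hy [_ Hgy]]; apply Huniq; split; [exact Hy | rewrite Hg in Hgy; lra].
Qed.
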